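(* Let $P=\{x\in\mathbb{R}^n:\tilde A x+\tilde b\ge 0\}$ be a polyhedron (with $\tilde A\in\mathbb{R}^{p\times n}$, $\tilde b\in\mathbb{R}^p$) having at least two non-parallel linear boundaries, i.e. its boundary contains facets lying in two non-parallel hyperplanes. Then the indicator function $\mathbb{1}_P$ cannot be expressed on $\mathbb{R}^n$ by any discrete-time LIF-SNN with a single time step ($T=1$) and only one hidden (spike) layer ($L=1$), neither with spike output nor with membrane potential output.
   Context: With $T=1$, $L=1$, direct encoding and input $x\in\mathbb{R}^n$, a discrete-time LIF-SNN computes the spike vector $s^1=H(Wx+b')$ for some $W\in\mathbb{R}^{m\times n}$, $b'\in\mathbb{R}^m$ (the bias absorbing the initial potential and threshold terms), where $H$ is the entrywise Heaviside function ($H(z)=1$ iff $z\ge 0$). With spike output (which requires $m=1$) the realization is $x\mapsto H(\langle w,x\rangle+b')$; with membrane potential output the realization is $x\mapsto w_0+\sum_{i=1}^m v_i H(\langle w_i,x\rangle+b'_i)$ for arbitrary $w_0,v_1,\dots,v_m\in\mathbb{R}$. The indicator function $\mathbb{1}_P$ equals $1$ on $P$ and $0$ on $\mathbb{R}^n\setminus P$. *)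

From HB Require Import structures.
From mathcomp Require Import all_boot all_order all_algebra.
From mathcomp Require Import reals.
Set Implicit Arguments. Unset Strict Implicit. Unset Printing Implicit Defensive.
Import Order.TTheory GRing.Theory Num.Theory.
Local Open Scope ring_scope.

Section Defs.
Variable R : realType.

Definition dotv (n : nat) (u v : 'cV[R]_n) : R := \sum_(i < n) u i 0 * v i 0.

Definition heav (z : R) : R := if 0 <= z then 1 else 0.

Definition in_polyhedron (n p : nat) (A : 'M[R]_(p, n)) (b : 'cV[R]_p)
  (x : 'cV[R]_n) : bool := [forall i : 'I_p, 0 <= (A *m x + b) i 0].

Definition indicator_poly (n p : nat) (A : 'M[R]_(p, n)) (b : 'cV[R]_p)
  (x : 'cV[R]_n) : R := if in_polyhedron A b x then 1 else 0.

(* The hyperplane {x | <a,x> + c = 0} (a <> 0) contains a facet of P: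
   it is a supporting hyperplane of P and P meets it in an
   (n-1)-dimensional set, i.e. in n affinely independent points
   x0, x0 + d_0, ..., x0 + d_(n-2). *)
Definition facet_in_hyperplane (n p : nat) (A : 'M[R]_(p, n)) (b : 'cV[R]_p)
  (a : 'cV[R]_n) (c : R) : Prop :=
  a != 0 /\
  (forall x, in_polyhedron A b x -> 0 <= dotv a x + c) /\
  exists (x0 : 'cV[R]_n) (d : 'I_n.-1 -> 'cV[R]_n),
    [/\ in_polyhedron A b x0, dotv a x0 + c = 0,
        (forall i, in_polyhedron A b (x0 + d i) /\ dotv a (x0 + d i) + c = 0) &
        (forall lam : 'I_n.-1 -> R,
            \sum_(i < n.-1) lam i *: d i = 0 -> forall i, lam i = 0)].

Definition parallel_normals (n : nat) (a1 a2 : 'cV[R]_n) : Prop :=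
  exists k : R, a1 = k *: a2.

Definition two_nonparallel_boundaries (n p : nat) (A : 'M[R]_(p, n))
  (b : 'cV[R]_p) : Prop :=
  exists (a1 a2 : 'cV[R]_n) (c1 c2 : R),
    [/\ facet_in_hyperplane A b a1 c1, facet_in_hyperplane A b a2 c2 &
        ~ parallel_normals a1 a2].

(* Realizations of a LIF-SNN with T = 1, L = 1, direct encoding. *)
Definition snn_spike_realization (n : nat) (w : 'cV[R]_n) (b' : R)
  (x : 'cV[R]_n) : R := heav (dotv w x + b').

Definition snn_membrane_realization (n m : nat) (w0 : R) (v : 'I_m -> R)
  (W : 'I_m -> 'cV[R]_n) (b' : 'I_m -> R) (x : 'cV[R]_n) : R :=
  w0 + \sum_(i < m) v i * heav (dotv (W i) x + b' i).

End Defs.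

From HB Require Import structures.
From mathcomp Require Import all_boot all_order all_algebra.
From mathcomp Require Import reals ring lra zify.
Set Implicit Arguments.
Unset Strict Implicit.
Unset Printing Implicit Defensive.
Import Order.TTheory GRing.Theory Num.Theory.
Local Open Scope ring_scope.

(* Restrict a membrane realization f to the plane x0 + s u - t a1, where x0 + [0,1] u
   lies on the facet in {a1 x + c1 = 0} and u is a facet direction not orthogonal to
   the second normal a2 (one exists: the facet directions span the orthogonal of a1),
   so that the line t = 0 also leaves P through the second boundary.  A Heaviside unit jumps across t = 0 only if its own hyperplane contains
   the whole line, unless s is one of finitely many crossing points; hence the jump
   f(s, 0) - f(s, 0+) is a constant C for generic s.  But 1_P jumps by 1 on the facet
   and by 0 on the part of the line beyond the second boundary.  Spike output is the
   case m = 1. *)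

Section SnnIndicator.
Variable R : realType.
Implicit Types (g e tau : R) (l : seq R).

Lemma dotvDr n (w x y : 'cV[R]_n) : dotv w (x + y) = dotv w x + dotv w y.
Proof. by rewrite /dotv -big_split; apply: eq_bigr => i _; rewrite mxE mulrDr. Qed.

Lemma dotvZr n (w x : 'cV[R]_n) k : dotv w (k *: x) = k * dotv w x.
Proof. by rewrite /dotv mulr_sumr; apply: eq_bigr => i _; rewrite mxE mulrCA. Qed.

Lemma dotvBr n (w x y : 'cV[R]_n) : dotv w (x - y) = dotv w x - dotv w y.
Proof. by rewrite -scaleN1r dotvDr dotvZr mulN1r. Qed.

Lemma dotvv_gt0 n (a : 'cV[R]_n) : a != 0 -> 0 < dotv a a.
Proof.
have sq_ge0 (r : R) : 0 <= r * r by rewrite -expr2 sqr_ge0.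
move=> a_neq0; rewrite lt_def sumr_ge0 ?andbT => [|i _]; last exact: sq_ge0.
apply: contra a_neq0 => /eqP dot0; apply/eqP/matrixP => i j.
rewrite (ord1 j) mxE; apply/eqP.
have /eqP := psumr_eq0P (fun i _ => sq_ge0 (a i 0)) dot0 (i := i) isT.
by rewrite mulf_eq0 orbb.
Qed.

Lemma heavD_small g e : `|e| < `|g| -> heav (g + e) = heav g.
Proof.
move=> /ltr_normlP[lo hi]; rewrite /heav.
have [g_ge0|g_lt0] := leP 0 g.
  by rewrite ger0_norm // in lo; have -> : 0 <= g + e by lra.
rewrite ltr0_norm // in hi; have -> // : (0 <= g + e) = false.
by apply/negbTE; rewrite -ltNge; lra.
Qed.

Definition near0plus (Q : R -> Prop) :=
  exists2 t0 : R, 0 < t0 & forall t, 0 < t <= t0 -> Q t.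

Lemma near0plus_ex Q : near0plus Q -> exists2 t, 0 < t & Q t.
Proof. by case=> t0 t0_gt0 Q_t; exists t0 => //; apply: Q_t; rewrite t0_gt0 lexx. Qed.

Lemma near0plus_all (I : finType) (Q : I -> R -> Prop) :
  (forall i, near0plus (Q i)) -> near0plus (fun t => forall i, Q i t).
Proof.
move=> /fin_all_exists2[t0 t0_gt0 Q_t].
exists (\big[Num.min/1]_i t0 i) => [|t /andP[t_gt0 t_le] i].
  by apply/bigmin_gtP; split.
by apply: Q_t; rewrite t_gt0 (le_trans t_le) ?bigmin_le.
Qed.

Lemma near0plus_heav_shift g tau :
  near0plus (fun t => heav (g - t * tau) = heav g - ((g == 0) && (0 < tau))%:R).
Proof.
have [->|g_neq0] := eqVneq g 0.
  exists 1 => // t /andP[t_gt0 _]; rewrite sub0r /heav lexx /=.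
  by rewrite oppr_ge0 pmulr_rle0 // leNgt; case: (0 < tau); rewrite ?subrr ?subr0.
have norm_tau := normr_ge0 tau.
exists (`|g| / (`|tau| + 1)) => [|t /andP[t_gt0]].
  by rewrite divr_gt0 ?normr_gt0 //; lra.
rewrite ler_pdivlMr; last by lra.
move=> t_le; rewrite subr0 heavD_small // normrN normrM gtr0_norm //.
nra.
Qed.

Lemma near0plus_heav_sum_shift (I : finType) (v gam tau : I -> R) :
  near0plus (fun t => \sum_i v i * heav (gam i - t * tau i) =
    \sum_i v i * heav (gam i) - \sum_i v i * ((gam i == 0) && (0 < tau i))%:R).
Proof.
have [t0 t0_gt0 shift] := near0plus_all (fun i => near0plus_heav_shift (gam i) (tau i)).
exists t0 => // t /shift {}shift; rewrite -sumrB; apply: eq_bigr => i _.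
by rewrite shift mulrBr.
Qed.

Lemma exists_notin_itv l a b : a < b -> exists2 s, a < s < b & s \notin l.
Proof.
elim: l a b => [|x l IHl] a b lt_ab.
  by exists ((a + b) / 2) => //; apply/andP; split; lra.
pose c := (a + b) / 2; have [lt_ac lt_cb] : a < c /\ c < b by rewrite /c; split; lra.
have [x_le_c|lt_cx] := leP x c.
  have [s /andP[lt_cs lt_sb] s_notin] := IHl c b lt_cb.
  exists s; first by apply/andP; split; lra.
  by rewrite inE negb_or s_notin andbT; apply/eqP; lra.
have [s /andP[lt_as lt_sc] s_notin] := IHl a c lt_ac.
exists s; first by apply/andP; split; lra.
by rewrite inE negb_or s_notin andbT; apply/eqP; lra.
Qed.

Lemma exists_itv_affine_lt0 (al be : R) : be != 0 ->
  exists lo hi, lo < hi /\ forall s, lo < s < hi -> al + s * be < 0.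
Proof.
move=> be_neq0; pose s0 := - al / be.
have affineE s : al + s * be = (s - s0) * be by rewrite /s0; field.
have [be_lt0|be_gt0|be0] := ltgtP be 0; last by rewrite be0 eqxx in be_neq0.
  by exists s0, (s0 + 1); split=> [|s /andP[? ?]]; rewrite ?affineE; nra.
by exists (s0 - 1), s0; split=> [|s /andP[? ?]]; rewrite ?affineE; nra.
Qed.

Lemma snn_membrane_jump n m w0 (v : 'I_m -> R) W b' (x0 u a : 'cV[R]_n) :
  exists l (C : R), forall s, s \notin l -> near0plus (fun t =>
    snn_membrane_realization w0 v W b' (x0 + s *: u - t *: a) =
    snn_membrane_realization w0 v W b' (x0 + s *: u) - C).
Proof.
pose be i := dotv (W i) x0 + b' i; pose sg i := dotv (W i) u; pose ta i := dotv (W i) a.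
exists [seq - be i / sg i | i <- enum 'I_m & sg i != 0].
pose C := \sum_i v i * ((sg i == 0) && (be i == 0) && (0 < ta i))%:R.
exists C => s s_notin.
have jump_C : \sum_i v i * ((be i + s * sg i == 0) && (0 < ta i))%:R = C.
  apply: eq_bigr => i _; congr (_ * (_ && _)%:R).
  have [->|sg_neq0] := eqVneq (sg i) 0; first by rewrite mulr0 addr0.
  apply/negbTE; apply: contra s_notin => /eqP gam0; apply/mapP; exists i.
    by rewrite mem_filter sg_neq0 mem_enum.
  by apply: (mulIf sg_neq0); rewrite divfK //; lra.
have [t0 t0_gt0 shift] := near0plus_heav_sum_shift v (fun i => be i + s * sg i) ta.
have realization_z t : snn_membrane_realization w0 v W b' (x0 + s *: u - t *: a) =
    w0 + \sum_i v i * heav (be i + s * sg i - t * ta i).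
  congr (_ + _); apply: eq_bigr => i _.
  by rewrite dotvBr dotvDr !dotvZr /be /sg /ta; congr (_ * heav _); ring.
exists t0 => // t /shift shift_t.
have := realization_z 0; rewrite scale0r subr0 => ->.
under [in RHS]eq_bigr do rewrite mul0r subr0.
by rewrite realization_z shift_t jump_C addrA.
Qed.

Lemma parallel_normals_of_orthogonal n (a1 a2 : 'cV[R]_n) (d : 'I_n.-1 -> 'cV[R]_n) :
  a2 != 0 ->
  (forall lam : 'I_n.-1 -> R, \sum_(i < n.-1) lam i *: d i = 0 -> forall i, lam i = 0) ->
  (forall i, dotv a1 (d i) = 0) -> (forall i, dotv a2 (d i) = 0) ->
  parallel_normals a1 a2.
Proof.
move=> a2_neq0 d_free a1_orth a2_orth.
pose D := \matrix_(i < n.-1) (d i)^T.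
have orthD (a : 'cV[R]_n) : (forall i, dotv a (d i) = 0) -> a^T *m D^T = 0.
  move=> a_orth; apply/rowP => i; rewrite !mxE -[RHS](a_orth i).
  by apply: eq_bigr => j _; rewrite !mxE.
have D_free : row_free D.
  apply/inj_row_free => w wD0; apply/rowP => i; rewrite mxE.
  apply: (d_free (fun i => w 0 i)); apply: trmx_inj.
  rewrite trmx0 -wD0 mulmx_sum_row linear_sum; apply: eq_bigr => k _.
  by rewrite linearZ /= rowK.
have rank_a12 : (\rank (col_mx a1^T a2^T) <= 1)%N.
  have := mulmx0_rank_max (_ : col_mx a1^T a2^T *m D^T = 0).
  rewrite mul_col_mx !orthD // col_mx0 mxrank_tr (eqP D_free) => /(_ erefl); lia.
have rank_a2 : \rank a2^T = 1%N by rewrite rank_rV trmx_eq0 a2_neq0.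
have : (a1^T <= a2^T)%MS.
  apply: submx_trans (addsmxSl a1^T a2^T) _.
  rewrite -(mxrank_leqif_sup (addsmxSr a1^T a2^T)) eqn_leq mxrankS ?addsmxSr //=.
  by rewrite addsmxE rank_a2.
by case/sub_rVP => k a1k; exists k; apply: trmx_inj; rewrite a1k linearZ.
Qed.

Section Polyhedron.
Variables (n p : nat) (A : 'M[R]_(p, n)) (b : 'cV[R]_p).

Lemma in_polyhedron_segment x u s :
  in_polyhedron A b x -> in_polyhedron A b (x + u) -> 0 <= s <= 1 ->
  in_polyhedron A b (x + s *: u).
Proof.
move=> /forallP Px /forallP Pxu /andP[s_ge0 s_le1]; apply/forallP => k.
by have := Px k; have := Pxu k; rewrite !mulmxDr -scalemxAr !mxE; nra.
Qed.

Lemma indicator_poly_beyond_support a c x t :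
  (forall y, in_polyhedron A b y -> 0 <= dotv a y + c) -> a != 0 ->
  dotv a x + c = 0 -> 0 < t -> indicator_poly A b (x - t *: a) = 0.
Proof.
move=> supp a_neq0 ax0 t_gt0; rewrite /indicator_poly; case: ifP => // /supp.
by rewrite dotvBr dotvZr; have := mulr_gt0 t_gt0 (dotvv_gt0 a_neq0); lra.
Qed.

Lemma no_snn_membrane_indicator :
  two_nonparallel_boundaries A b ->
  ~ exists m w0 (v : 'I_m -> R) W b',
      forall x, indicator_poly A b x = snn_membrane_realization w0 v W b' x.
Proof.
move=> [a1 [a2 [c1 [c2 [facet1 facet2 nonpar]]]]] [m [w0 [v [W [b' ind_eq]]]]].
have [a1_neq0 [supp1 [x0 [d [Px0 a1x0 Pd d_free]]]]] := facet1.
have [a2_neq0 [supp2 _]] := facet2.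
have a1_orth i : dotv a1 (d i) = 0 by have [_] := Pd i; rewrite dotvDr; lra.
have [i0 a2u_neq0] : exists i, dotv a2 (d i) != 0.
  apply/existsP; apply: contraT; rewrite negb_exists => /forallP a2_orth.
  exfalso; apply: nonpar; apply: parallel_normals_of_orthogonal a2_neq0 d_free a1_orth _.
  by move=> i; apply/eqP/negPn.
set u := d i0.
have [l [C jump]] := snn_membrane_jump w0 v W b' x0 u a1.
have jump_eq s : s \notin l -> indicator_poly A b (x0 + s *: u) = C.
  move=> /jump/near0plus_ex[t t_gt0]; rewrite -!ind_eq.
  rewrite (indicator_poly_beyond_support supp1 a1_neq0) //; first lra.
  by rewrite dotvDr dotvZr a1_orth mulr0 addr0.
have [s1 /andP[s1_gt0 s1_lt1] s1_notin] := exists_notin_itv l ltr01.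
have in_s1 : indicator_poly A b (x0 + s1 *: u) = 1.
  rewrite /indicator_poly in_polyhedron_segment //; first exact: (Pd i0).1.
  by rewrite !ltW.
have [lo [hi [lt_lohi a2_lt0]]] := exists_itv_affine_lt0 (dotv a2 x0 + c2) a2u_neq0.
have [s2 s2_in s2_notin] := exists_notin_itv l lt_lohi.
have out_s2 : indicator_poly A b (x0 + s2 *: u) = 0.
  rewrite /indicator_poly; case: ifP => // /supp2.
  by rewrite dotvDr dotvZr; have := a2_lt0 _ s2_in; lra.
by move: (jump_eq _ s1_notin) (jump_eq _ s2_notin); rewrite in_s1 out_s2; lra.
Qed.

End Polyhedron.
End SnnIndicator.

Theorem lemmaB7 (R : realType) (n p : nat) (A : 'M[R]_(p, n)) (b : 'cV[R]_p) :
  two_nonparallel_boundaries A b ->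
  (~ exists (w : 'cV[R]_n) (b' : R),
       forall x : 'cV[R]_n, indicator_poly A b x = snn_spike_realization w b' x) /\
  (~ exists (m : nat) (w0 : R) (v : 'I_m -> R) (W : 'I_m -> 'cV[R]_n) (b' : 'I_m -> R),
       forall x : 'cV[R]_n,
         indicator_poly A b x = snn_membrane_realization w0 v W b' x).
Proof.
move=> bdry; split; last exact: no_snn_membrane_indicator.
move=> [w [b' spike]]; apply: (no_snn_membrane_indicator bdry).
exists 1%N, 0, (fun=> 1), (fun=> w), (fun=> b') => x.
by rewrite spike /snn_membrane_realization big_ord1 add0r mul1r.
Qed.
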